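(* Let $v_\lambda(k)$ ($|k|<\Lambda$, $\lambda\in\{1,2\}$) be nonzero complex coefficients and $w\ge0$ an integrable function on $\mathbb{R}^3$, $\widehat w(k)=\int e^{ik\cdot x}w(x)\,dx$, such that for all complex families $f_\lambda(k)$ $$\sum_{|k|<\Lambda,\lambda}\frac{|f_\lambda(k)|^2}{|v_\lambda(k)|^2}\ \ge\ \sum_{|k|,|k'|<\Lambda,\ \lambda,\lambda'}\frac{1}{2V}\overline{f_\lambda(k)}\,f_{\lambda'}(k')\,\widehat w(k-k'),$$ and let $L(y)=\frac{1}{\sqrt{2V}}\sum_{|k|<\Lambda,\lambda}\sqrt{|k|}\,a_\lambda(k)\overline{v_\lambda(k)}e^{ik\cdot y}$. Then, with $c=\frac{1}{2V}\sum_{|k|<\Lambda,\lambda}|k|\,|v_\lambda(k)|^2$, both of the following hold as quadratic forms: $$H_f\ge -c\int w(y)\,dy+\frac14\int w(y)\big(L(y)+L^*(y)\big)^2dy,$$ $$H_f\ge -c\int w(y)\,dy-\frac14\int w(y)\big(L(y)-L^*(y)\big)^2dy.$$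
   Context: The radiation field lives in a box of side $L$, volume $V=L^3$; modes $k\in(2\pi/L)\mathbb{Z}^3$ with $|k|<\Lambda$, polarizations $\lambda\in\{1,2\}$. $\mathcal F$ is the photon Fock space with $[a_\lambda(k),a^*_{\lambda'}(k')]=\delta_{\lambda\lambda'}\delta(k,k')$, all other pairs commuting, and $H_f=\sum_{|k|<\Lambda}\sum_{\lambda}|k|\,a^*_\lambda(k)a_\lambda(k)$. *)

From HB Require Import structures.
From mathcomp Require Import all_boot all_order all_algebra.
From mathcomp Require Import complex.
From mathcomp Require Import all_classical all_reals all_analysis.
Set Implicit Arguments. Unset Strict Implicit. Unset Printing Implicit Defensive.
Import Order.TTheory GRing.Theory Num.Theory.
Local Open Scope ring_scope.

Section Photons.
Variable R : realType.
Local Notation C := (R[i]).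

Definition R3 := (R * R * R)%type.
Definition leb3 := ((@lebesgue_measure R \x @lebesgue_measure R)
                      \x @lebesgue_measure R)%E.

Definition dot3 (k y : R3) : R := k.1.1 * y.1.1 + k.1.2 * y.1.2 + k.2 * y.2.
Definition norm3 (k : R3) : R := Num.sqrt (dot3 k k).

Definition expi (t : R) : C := (cos t +i* sin t)%C.

Definition int3 (g : R3 -> R) : R := Rintegral leb3 setT g.

Definition fourier (w : R3 -> R) (k : R3) : C :=
  (int3 (fun x => cos (dot3 k x) * w x) +i* int3 (fun x => sin (dot3 k x) * w x))%C.

(** The box modes: k = (2 pi / L) n, n in Z^3, |k| < Lambda.  All such n have
    |n_i| <= M := trunc(Lambda L / (2 pi)); we enumerate [-M, M]^3 and filter. *)
Definition kvec (L : R) (n : int * int * int) : R3 :=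
  ((2 * pi / L) * n.1.1%:~R, (2 * pi / L) * n.1.2%:~R, (2 * pi / L) * n.2%:~R).

Definition box_range (L Lam : R) : seq int :=
  let M := Num.truncn (Lam * L / (2 * pi)) in
  [seq (x%:Z - M%:Z)%R | x <- iota 0 (M + M).+1].

Definition box_modes (L Lam : R) : seq (int * int * int) :=
  [seq n <- [seq (ab, c) | ab <- [seq (a, b) | a <- box_range L Lam,
                                     b <- box_range L Lam], c <- box_range L Lam]
     | norm3 (kvec L n) < Lam].

Definition nmodes (L Lam : R) : nat := size (box_modes L Lam).

(** Mode labels: (index of k in [box_modes], polarization in 'I_2 ~ {1,2}). *)
Definition mode (L Lam : R) := ('I_(nmodes L Lam) * 'I_2)%type.

Definition kmode (L Lam : R) (j : mode L Lam) : R3 :=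
  kvec L (nth (0, 0, 0)%R (box_modes L Lam) j.1).

(** Fock space: occupation-number configurations; a finite-particle vector is a
    function on configurations with finite support. Operators act pointwise. *)
Definition config (L Lam : R) := {ffun mode L Lam -> nat}.

Definition incr (L Lam : R) (n : config L Lam) (j : mode L Lam) : config L Lam :=
  [ffun m => (n m + (m == j))%N].
Definition decr (L Lam : R) (n : config L Lam) (j : mode L Lam) : config L Lam :=
  [ffun m => (n m - (m == j))%N].

Definition sqrtn (m : nat) : C := (Num.sqrt (m%:R : R))%:C%C.

Definition ann (L Lam : R) (j : mode L Lam) (phi : config L Lam -> C) :
  config L Lam -> C := fun n => sqrtn (n j).+1 * phi (incr n j).
Definition cre (L Lam : R) (j : mode L Lam) (phi : config L Lam -> C) :
  config L Lam -> C := fun n => sqrtn (n j) * phi (decr n j).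

Definition opadd (L Lam : R) (A B : (config L Lam -> C) -> config L Lam -> C) :=
  fun phi n => A phi n + B phi n.
Definition opsub (L Lam : R) (A B : (config L Lam -> C) -> config L Lam -> C) :=
  fun phi n => A phi n - B phi n.
Definition opsq (L Lam : R) (A : (config L Lam -> C) -> config L Lam -> C) :=
  fun phi => A (A phi).

Definition Hf (L Lam : R) (phi : config L Lam -> C) : config L Lam -> C :=
  fun n => \sum_(j : mode L Lam) (norm3 (kmode j))%:C%C * cre j (ann j phi) n.

Definition volume (L : R) : R := L ^+ 3.

Definition Lop (L Lam : R) (v : mode L Lam -> C) (y : R3)
  (phi : config L Lam -> C) : config L Lam -> C :=
  fun n => \sum_(j : mode L Lam)
     (Num.sqrt (norm3 (kmode j)) / Num.sqrt (2 * volume L))%:C%C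
       * (v j)^* * expi (dot3 (kmode j) y) * ann j phi n.
Definition Lstar (L Lam : R) (v : mode L Lam -> C) (y : R3)
  (phi : config L Lam -> C) : config L Lam -> C :=
  fun n => \sum_(j : mode L Lam)
     (Num.sqrt (norm3 (kmode j)) / Num.sqrt (2 * volume L))%:C%C
       * v j * (expi (dot3 (kmode j) y))^* * cre j phi n.

(** <psi, phi> for psi supported in the (duplicate-free) list s *)
Definition dotF (L Lam : R) (s : seq (config L Lam)) (psi phi : config L Lam -> C) : C :=
  \sum_(n <- s) (psi n)^* * phi n.

Definition supported_in (L Lam : R) (s : seq (config L Lam)) (psi : config L Lam -> C) :=
  uniq s /\ forall n, n \notin s -> psi n = 0.

End Photons.

From HB Require Import structures.
From mathcomp Require Import all_boot all_order all_algebra.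
From mathcomp Require Import complex.
From mathcomp Require Import all_classical all_reals all_analysis.
From mathcomp Require Import ring lra.
Import Order.TTheory GRing.Theory Num.Theory.
Local Open Scope ring_scope.
Set Implicit Arguments. Unset Strict Implicit. Unset Printing Implicit Defensive.

(* For fixed y the field operator L = L(y) satisfies [L, L^*] = c: the phases
   e^{ik.y} have modulus one.  With the parallelogram law this gives
     |(L + L^* ) psi|^2 + |(L - L^* ) psi|^2 = 2 |L psi|^2 + 2 |L^* psi|^2
                                          = 4 |L psi|^2 + 2 c |psi|^2,
   and since <psi, (L + L^* )^2 psi> = |(L + L^* ) psi|^2 >= 0 while
   <psi, (L - L^* )^2 psi> = - |(L - L^* ) psi|^2 <= 0, both <(L + L^* )^2> and
   - <(L - L^* )^2> are at most 4 |L psi|^2 + 2 c |psi|^2.  Integrated against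
   w >= 0, the term |L(y) psi|^2 becomes, configuration by configuration, the
   left-hand side of the hypothesis on w-hat for f_j = sqrt|k_j| v_j conj(a_j psi),
   whose right-hand side sums to <psi, H_f psi>.  Dividing by 4 leaves the
   error term c/2 int w |psi|^2, which is below c int w |psi|^2. *)

Section ComplexParts.
Variable R : rcfType.
Implicit Types x y : R[i].

Lemma ReD x y : complex.Re (x + y) = complex.Re x + complex.Re y.
Proof. by case: x; case: y. Qed.
Lemma ImD x y : complex.Im (x + y) = complex.Im x + complex.Im y.
Proof. by case: x; case: y. Qed.
Lemma ReN x : complex.Re (- x) = - complex.Re x.
Proof. by case: x. Qed.
Lemma ReM x y :
  complex.Re (x * y) = complex.Re x * complex.Re y - complex.Im x * complex.Im y.
Proof. by case: x; case: y. Qed.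
Lemma ImM x y :
  complex.Im (x * y) = complex.Re x * complex.Im y + complex.Im x * complex.Re y.
Proof. by case: x => a b; case: y. Qed.
Lemma ReZ (r : R) x : complex.Re (r%:C%C * x) = r * complex.Re x.
Proof. by case: x => a b /=; ring. Qed.
Lemma conj_realc (r : R) : (r%:C%C : R[i])^* = r%:C%C.
Proof. exact: conjc_real. Qed.

Lemma ReJ x : complex.Re x^* = complex.Re x.
Proof. by case: x. Qed.
Lemma ImJ x : complex.Im x^* = - complex.Im x.
Proof. by case: x. Qed.

Lemma Re_sum (I : Type) (r : seq I) (P : pred I) (F : I -> R[i]) :
  complex.Re (\sum_(i <- r | P i) F i) = \sum_(i <- r | P i) complex.Re (F i).
Proof. exact: (big_morph _ ReD). Qed.

Lemma Re_le x y : x <= y -> complex.Re x <= complex.Re y.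
Proof. by rewrite lecE => /andP[]. Qed.

Lemma Re_ge0 x : 0 <= x -> 0 <= complex.Re x.
Proof. exact: Re_le. Qed.

End ComplexParts.

Section ComplexExponential.
Variable R : realType.

Lemma expiJM (a b : R) : (expi a)^* * expi b = expi (b - a).
Proof.
rewrite /expi cosB sinB; apply/eqP; rewrite eq_complex /=.
by apply/andP; split; apply/eqP; ring.
Qed.

Lemma norm_expi (t : R) : `|expi t| = 1.
Proof. by rewrite normc_def /= cos2Dsin2 sqrtr1. Qed.

Lemma expiMJ (t : R) : expi t * (expi t)^* = 1.
Proof. by rewrite mulrC expiJM subrr /expi cos0 sin0. Qed.

End ComplexExponential.

Lemma eq_big_supp (T : eqType) (V : nmodType) (s1 s2 : seq T) (F : T -> V) :
  uniq s1 -> uniq s2 ->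
  (forall x, x \notin s1 -> F x = 0) -> (forall x, x \notin s2 -> F x = 0) ->
  \sum_(x <- s1) F x = \sum_(x <- s2) F x.
Proof.
move=> s1_uniq s2_uniq F1 F2.
rewrite [LHS](bigID (mem s2)) [RHS](bigID (mem s1)) /=.
rewrite [X in _ + X = _]big1 => [|x /F2 //]; rewrite [X in _ = _ + X]big1 => [|x /F1 //].
rewrite !addr0 -[LHS]big_filter -[RHS]big_filter; apply/perm_big/uniq_perm.
- exact: filter_uniq.
- exact: filter_uniq.
- by move=> x; rewrite !mem_filter andbC.
Qed.

Section BoundedMeasurable.
Context {d} {T : measurableType d} {R : realType}.
Local Notation C := R[i].
Implicit Types F G : T -> C.
Import measurable_realfun.

Definition bmeasurable F :=
  [/\ measurable_fun setT (fun y => complex.Re (F y)),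
      measurable_fun setT (fun y => complex.Im (F y)) &
      exists K : R, forall y, `|F y| <= K%:C%C].

Lemma eq_bmeasurable F G : F =1 G -> bmeasurable F -> bmeasurable G.
Proof.
move=> FG [mRe mIm [K FK]]; split.
- by apply: eq_measurable_fun mRe => y _; rewrite FG.
- by apply: eq_measurable_fun mIm => y _; rewrite FG.
- by exists K => y; rewrite -FG.
Qed.

Lemma bmeasurable_cst (a : C) : bmeasurable (fun=> a).
Proof.
split; [exact: measurable_cst | exact: measurable_cst |].
by exists (complex.Re `|a|) => _; rewrite RRe_real ?normr_real.
Qed.

Lemma bmeasurableD F G : bmeasurable F -> bmeasurable G ->
  bmeasurable (fun y => F y + G y).
Proof.
move=> [mReF mImF [K FK]] [mReG mImG [K' GK]]; split.
- by apply: eq_measurable_fun (measurable_funD mReF mReG) => y _; rewrite ReD.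
- by apply: eq_measurable_fun (measurable_funD mImF mImG) => y _; rewrite ImD.
- by exists (K + K') => y; rewrite rmorphD (le_trans (ler_normD _ _)) ?lerD.
Qed.

Lemma bmeasurableM F G : bmeasurable F -> bmeasurable G ->
  bmeasurable (fun y => F y * G y).
Proof.
move=> [mReF mImF [K FK]] [mReG mImG [K' GK]]; split.
- apply: eq_measurable_fun
    (measurable_funB (measurable_funM mReF mReG) (measurable_funM mImF mImG)).
  by move=> y _; rewrite ReM.
- apply: eq_measurable_fun
    (measurable_funD (measurable_funM mReF mImG) (measurable_funM mImF mReG)).
  by move=> y _; rewrite ImM.
- by exists (K * K') => y; rewrite rmorphM normrM ler_pM.
Qed.

Lemma bmeasurableN F : bmeasurable F -> bmeasurable (fun y => - F y).
Proof.
move=> mF; apply: eq_bmeasurable (bmeasurableM (bmeasurable_cst (-1)) mF) => y.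
by rewrite mulN1r.
Qed.

Lemma bmeasurableB F G : bmeasurable F -> bmeasurable G ->
  bmeasurable (fun y => F y - G y).
Proof. by move=> mF mG; apply: bmeasurableD mF (bmeasurableN mG). Qed.

Lemma bmeasurableJ F : bmeasurable F -> bmeasurable (fun y => (F y)^*).
Proof.
move=> [mRe mIm [K FK]]; split.
- by apply: eq_measurable_fun mRe => y _; rewrite ReJ.
- by apply: eq_measurable_fun (measurable_funN mIm) => y _; rewrite ImJ.
- by exists K => y; rewrite norm_conjC.
Qed.

Lemma bmeasurable_sum (I : Type) (r : seq I) (F : I -> T -> C) :
  (forall i, bmeasurable (F i)) -> bmeasurable (fun y => \sum_(i <- r) F i y).
Proof.
move=> mF; elim: r => [|i r IH].
  by apply: eq_bmeasurable (bmeasurable_cst 0) => y; rewrite big_nil.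
by apply: eq_bmeasurable (bmeasurableD (mF i) IH) => y; rewrite big_cons.
Qed.

Lemma bounded_normr_le (h : T -> R) (K : R) :
  (forall y, `|h y| <= K) -> [bounded h y | y in setT].
Proof.
move=> hK; rewrite /bounded_near; near=> M => y _ /=.
by apply: le_trans (hK y) _; near: M; apply: nbhs_pinfty_ge; exact: num_real.
Unshelve. all: end_near.
Qed.

End BoundedMeasurable.

Section WeightedIntegral.
Context d (T : measurableType d) (R : realType) (mu : {measure set T -> \bar R}).
Variable w : T -> R.
Hypothesis w_int : mu.-integrable setT (EFin \o w).
Local Notation C := R[i].
Implicit Types F G : T -> C.

Definition wint F : R := \int[mu]_y (w y * complex.Re (F y)).

Lemma eq_wint F G : F =1 G -> wint F = wint G.
Proof. by move=> FG; apply: eq_Rintegral => y _; rewrite FG. Qed.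

Lemma integrable_wbounded (h : T -> R) (K : R) :
  measurable_fun setT h -> (forall y, `|h y| <= K) ->
  mu.-integrable setT (EFin \o (fun y => w y * h y)).
Proof.
move=> mh hK.
by apply: eq_integrable (integrableMl measurableT w_int mh (bounded_normr_le hK)).
Qed.

Lemma integrable_wRe F : bmeasurable F ->
  mu.-integrable setT (EFin \o (fun y => w y * complex.Re (F y))).
Proof.
case=> mRe _ [K FK]; apply: (integrable_wbounded (K := K) mRe) => y.
by rewrite -lecR (le_trans (normc_ge_Re _)).
Qed.

Lemma wintD F G : bmeasurable F -> bmeasurable G ->
  wint (fun y => F y + G y) = wint F + wint G.
Proof.
move=> mF mG; rewrite /wint -RintegralD ?integrable_wRe //.
by apply: eq_Rintegral => y _; rewrite ReD mulrDr.
Qed.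

Lemma wintZ (a : R) F : bmeasurable F -> wint (fun y => a%:C%C * F y) = a * wint F.
Proof.
move=> mF; rewrite /wint -RintegralZl ?integrable_wRe //.
by apply: eq_Rintegral => y _; rewrite ReZ mulrCA.
Qed.

Lemma wint_cst (b : R) : wint (fun=> b%:C%C) = b * \int[mu]_y w y.
Proof.
rewrite /wint -RintegralZl //.
by apply: eq_Rintegral => y _; rewrite mulrC.
Qed.

Lemma wint_sum (I : Type) (r : seq I) (F : I -> T -> C) :
  (forall i, bmeasurable (F i)) ->
  wint (fun y => \sum_(i <- r) F i y) = \sum_(i <- r) wint (F i).
Proof.
move=> mF; elim: r => [|i r IH].
  rewrite big_nil (eq_wint (G := fun=> 0%:C%C)) => [|y]; last by rewrite big_nil.
  by rewrite wint_cst mul0r.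
rewrite big_cons -IH -wintD //; last exact: bmeasurable_sum.
by apply: eq_wint => y; rewrite big_cons.
Qed.

Lemma wint_le_affine F G (a b : R) : (forall y, 0 <= w y) ->
  bmeasurable F -> bmeasurable G ->
  (forall y, complex.Re (F y) <= a * complex.Re (G y) + b) ->
  wint F <= a * wint G + b * \int[mu]_y w y.
Proof.
move=> w_ge0 mF mG FG.
have maG : bmeasurable (fun y => a%:C%C * G y) := bmeasurableM (bmeasurable_cst _) mG.
rewrite -wintZ // -wint_cst -wintD //; last exact: bmeasurable_cst.
apply: le_Rintegral; rewrite ?integrable_wRe //.
  exact: bmeasurableD maG (bmeasurable_cst _).
by move=> y _; rewrite ReD ReZ ler_wpM2l.
Qed.

End WeightedIntegral.

Section Fourier.
Variable R : realType.
Variable w : R3 R -> R.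
Hypothesis w_int : (@leb3 R).-integrable setT (EFin \o w).
Local Notation C := R[i].
Import measurable_realfun.

Lemma dot3B (k k' y : R3 R) : dot3 (k - k') y = dot3 k y - dot3 k' y.
Proof. by rewrite /dot3 /=; ring. Qed.

Lemma measurable_dot3 (k : R3 R) : measurable_fun setT (dot3 k).
Proof.
apply: measurable_funD; [apply: measurable_funD|];
  apply: measurable_funM; try exact: measurable_cst.
- exact: measurableT_comp measurable_fst measurable_fst.
- exact: measurableT_comp measurable_snd measurable_fst.
- exact: measurable_snd.
Qed.

Lemma bmeasurable_expi (k : R3 R) : bmeasurable (fun y => expi (dot3 k y)).
Proof.
split.
- exact: measurableT_comp (continuous_measurable_fun (@continuous_cos R))
    (measurable_dot3 k).
- exact: measurableT_comp (continuous_measurable_fun (@continuous_sin R))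
    (measurable_dot3 k).
- by exists 1 => y; rewrite norm_expi.
Qed.

Lemma wint_expi (D : C) (k : R3 R) :
  wint (@leb3 R) w (fun y => D * expi (dot3 k y)) = complex.Re (D * fourier w k).
Proof.
have [mcos msin _] := bmeasurable_expi k.
have int_cos : (@leb3 R).-integrable setT (EFin \o (fun y => cos (dot3 k y) * w y)).
  apply: eq_integrable (integrable_wbounded w_int (K := 1) mcos _) => [//|y _|y].
    by rewrite /= mulrC.
  exact: cos_max.
have int_sin : (@leb3 R).-integrable setT (EFin \o (fun y => sin (dot3 k y) * w y)).
  apply: eq_integrable (integrable_wbounded w_int (K := 1) msin _) => [//|y _|y].
    by rewrite /= mulrC.
  exact: sin_max.
rewrite ReM /= /int3 -!RintegralZl // -RintegralB //; last 2 first.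
- by apply: eq_integrable (integrableZl measurableT _ int_cos).
- by apply: eq_integrable (integrableZl measurableT _ int_sin).
by apply: eq_Rintegral => y _; rewrite ReM /=; ring.
Qed.

End Fourier.

Section Fock.
Variables (R : realType) (L Lam : R).
Local Notation C := R[i].
Local Notation M := (mode L Lam).
Local Notation cf := (config L Lam).
Local Notation sqrtn := (sqrtn R).
Implicit Types (n m : cf) (j k : M) (s t : seq cf) (phi psi chi : cf -> C).

Lemma incrE n j k : incr n j k = (n k + (k == j))%N.
Proof. by rewrite ffunE. Qed.

Lemma decrE n j k : decr n j k = (n k - (k == j))%N.
Proof. by rewrite ffunE. Qed.

Lemma decr_incr n j : decr (incr n j) j = n.
Proof. by apply/ffunP => k; rewrite decrE incrE addnK. Qed.

Lemma incr_decr n j : (0 < n j)%N -> incr (decr n j) j = n.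
Proof.
move=> nj_gt0; apply/ffunP => k; rewrite incrE decrE.
by case: eqP => [->|_]; [rewrite subnK | rewrite subn0 addn0].
Qed.

Lemma incr_inj j : injective (fun n : cf => incr n j).
Proof. by move=> n m /(congr1 (fun n => decr n j)); rewrite !decr_incr. Qed.

Lemma decr_incrC n j k : j != k -> decr (incr n j) k = incr (decr n k) j.
Proof.
move=> jk; apply/ffunP => i; rewrite !(incrE, decrE).
by case: (eqVneq i j) => [->|_]; rewrite ?(negbTE jk) ?subn0 ?addn0.
Qed.

Lemma sqrtn0 : sqrtn 0 = 0.
Proof. by rewrite /sqrtn sqrtr0. Qed.

Lemma conj_sqrtn p : (sqrtn p)^* = sqrtn p.
Proof. exact: conj_realc. Qed.

Lemma sqrtnM p : sqrtn p * sqrtn p = p%:R.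
Proof.
rewrite /sqrtn -rmorphM /= -expr2 sqr_sqrtr ?ler0n //.
by rewrite -[RHS](rmorph_nat (real_complex R)).
Qed.

Lemma ann_cre j k psi n :
  ann j (cre k psi) n = cre k (ann j psi) n + (j == k)%:R * psi n.
Proof.
rewrite /ann /cre; have [<-|jk] := eqVneq j k; last first.
  rewrite incrE decrE (negbTE jk) eq_sym (negbTE jk) addn0 subn0.
  by rewrite decr_incrC // mul0r addr0 mulrCA.
rewrite incrE decrE eqxx addn1 decr_incr mulrA sqrtnM mul1r.
have [nj0|nj_gt0] := posnP (n j); first by rewrite nj0 sqrtn0 !mul0r add0r mul1r.
by rewrite subn1 prednK // incr_decr // mulrA sqrtnM mulrSr mulrDl mul1r.
Qed.

Lemma ann_sum j (I : finType) (c : I -> C) (f : I -> cf -> C) n :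
  ann j (fun m => \sum_i c i * f i m) n = \sum_i c i * ann j (f i) n.
Proof. by rewrite /ann big_distrr; apply: eq_bigr => i _; rewrite mulrCA. Qed.

Lemma cre_sum j (I : finType) (c : I -> C) (f : I -> cf -> C) n :
  cre j (fun m => \sum_i c i * f i m) n = \sum_i c i * cre j (f i) n.
Proof. by rewrite /cre big_distrr; apply: eq_bigr => i _; rewrite mulrCA. Qed.

Lemma ann_cre_sum (a b : M -> C) psi n :
  \sum_j a j * ann j (fun m => \sum_k b k * cre k psi m) n =
  \sum_k b k * cre k (fun m => \sum_j a j * ann j psi m) n + (\sum_j a j * b j) * psi n.
Proof.
transitivity (\sum_j \sum_k a j * b k * (cre k (ann j psi) n + (j == k)%:R * psi n)).
  apply: eq_bigr => j _; rewrite ann_sum big_distrr /=; apply: eq_bigr => k _.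
  by rewrite ann_cre mulrA.
under eq_bigr do under eq_bigr do rewrite mulrDr.
under eq_bigr do rewrite big_split /=.
rewrite big_split mulr_suml /=; congr (_ + _).
  under [RHS]eq_bigr do rewrite cre_sum big_distrr /=.
  rewrite [RHS]exchange_big /=; apply: eq_bigr => j _; apply: eq_bigr => k _.
  by rewrite mulrA [b k * _]mulrC.
apply: eq_bigr => j _; rewrite (bigD1 j) //= eqxx mul1r big1 ?addr0 ?mulrA // => k kj.
by rewrite eq_sym (negbTE kj) mul0r mulr0.
Qed.

Lemma dotFC s phi chi : dotF s phi chi = (dotF s chi phi)^*.
Proof.
rewrite rmorph_sum; apply: eq_bigr => n _.
by rewrite rmorphM /= conjCK mulrC.
Qed.

Lemma dotF_ge0 s phi : 0 <= dotF s phi phi.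
Proof. by apply: sumr_ge0 => n _; rewrite mulrC; apply: mul_conjC_ge0. Qed.

Lemma dotFDl s phi chi xi :
  dotF s (fun n => phi n + chi n) xi = dotF s phi xi + dotF s chi xi.
Proof. by rewrite -big_split; apply: eq_bigr => n _; rewrite rmorphD mulrDl. Qed.

Lemma dotFBl s phi chi xi :
  dotF s (fun n => phi n - chi n) xi = dotF s phi xi - dotF s chi xi.
Proof. by rewrite -sumrB; apply: eq_bigr => n _; rewrite rmorphB mulrBl. Qed.

Lemma dotFDr s phi chi xi :
  dotF s phi (fun n => chi n + xi n) = dotF s phi chi + dotF s phi xi.
Proof. by rewrite -big_split; apply: eq_bigr => n _; rewrite mulrDr. Qed.

Lemma dotFBr s phi chi xi :
  dotF s phi (fun n => chi n - xi n) = dotF s phi chi - dotF s phi xi.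
Proof. by rewrite -sumrB; apply: eq_bigr => n _; rewrite mulrBr. Qed.

Lemma dotFZr s phi (c : C) chi : dotF s phi (fun n => c * chi n) = c * dotF s phi chi.
Proof. by rewrite big_distrr; apply: eq_bigr => n _; rewrite mulrCA. Qed.

Lemma dotF_sumr s phi (I : finType) (c : I -> C) (f : I -> cf -> C) :
  dotF s phi (fun n => \sum_i c i * f i n) = \sum_i c i * dotF s phi (f i).
Proof.
rewrite /dotF; under eq_bigr do rewrite big_distrr /=.
rewrite exchange_big; apply: eq_bigr => i _ /=.
by rewrite big_distrr; apply: eq_bigr => n _ /=; rewrite mulrCA.
Qed.

Lemma dotF_suml s (I : finType) (c : I -> C) (f : I -> cf -> C) chi :
  dotF s (fun n => \sum_i c i * f i n) chi = \sum_i (c i)^* * dotF s (f i) chi.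
Proof.
rewrite dotFC dotF_sumr rmorph_sum; apply: eq_bigr => i _.
by rewrite rmorphM /= -dotFC.
Qed.

Lemma dotF_parallelogram s phi chi :
  dotF s (fun n => phi n + chi n) (fun n => phi n + chi n) +
  dotF s (fun n => phi n - chi n) (fun n => phi n - chi n) =
  2%:R * (dotF s phi phi + dotF s chi chi).
Proof.
rewrite /dotF -!big_split mulr_sumr; apply: eq_bigr => n _ /=.
by rewrite rmorphD rmorphB; ring.
Qed.

Lemma supportedD s phi chi : supported_in s phi -> supported_in s chi ->
  supported_in s (fun n => phi n + chi n).
Proof. by move=> [s_uniq phi0] [_ chi0]; split=> // n ns; rewrite phi0 ?chi0 ?addr0. Qed.

Lemma supportedB s phi chi : supported_in s phi -> supported_in s chi ->
  supported_in s (fun n => phi n - chi n).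
Proof. by move=> [s_uniq phi0] [_ chi0]; split=> // n ns; rewrite phi0 ?chi0 ?subr0. Qed.

Lemma ann_supp s j psi n : supported_in s psi -> ann j psi n != 0 ->
  n \in [seq decr m j | m <- s].
Proof.
move=> [_ psi0]; rewrite /ann; apply: contraR => n_out.
rewrite psi0 ?mulr0 //; apply: contra n_out => incr_in.
by apply/mapP; exists (incr n j); rewrite ?decr_incr.
Qed.

Lemma cre_supp s j psi n : supported_in s psi -> cre j psi n != 0 ->
  n \in [seq incr m j | m <- s].
Proof.
move=> [_ psi0]; rewrite /cre; apply: contraR => n_out.
have [->|nj_gt0] := posnP (n j); first by rewrite sqrtn0 mul0r.
rewrite psi0 ?mulr0 //; apply: contra n_out => decr_in.
by apply/mapP; exists (decr n j); rewrite ?incr_decr.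
Qed.

Lemma dotF_cre s t j phi chi : supported_in s phi -> supported_in t chi ->
  dotF s phi (cre j chi) = dotF t (ann j phi) chi.
Proof.
move=> [s_uniq phi0] t_chi.
have -> : dotF t (ann j phi) chi = dotF [seq incr n j | n <- t] phi (cre j chi).
  rewrite /dotF big_map; apply: eq_bigr => n _.
  rewrite /ann /cre incrE eqxx addn1 decr_incr rmorphM /= conj_sqrtn.
  by rewrite mulrCA mulrA.
apply: (eq_big_supp (F := fun n => (phi n)^* * cre j chi n)) => //.
- by rewrite map_inj_uniq; [case: t_chi | exact: incr_inj].
- by move=> n /phi0 ->; rewrite conjC0 mul0r.
- move=> n n_out; suff /eqP -> : cre j chi n == 0 by rewrite mulr0.
  by move: n_out; apply: contraNT; apply: cre_supp.
Qed.

Definition adjacent s : seq cf :=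
  undup (flatten [seq [seq incr n j | n <- s] ++ [seq decr n j | n <- s]
                  | j <- index_enum M]).

Lemma mem_adjacent s j n :
  (n \in [seq incr m j | m <- s]) || (n \in [seq decr m j | m <- s]) ->
  n \in adjacent s.
Proof.
move=> n_in; rewrite mem_undup; apply/flattenP.
by exists ([seq incr m j | m <- s] ++ [seq decr m j | m <- s]);
  [apply/mapP; exists j; rewrite ?mem_index_enum | rewrite mem_cat].
Qed.

Lemma supported_ann s j psi : supported_in s psi ->
  supported_in (adjacent s) (ann j psi).
Proof.
move=> s_psi; split=> [|n]; first exact: undup_uniq.
apply: contraNeq => /(ann_supp s_psi) n_in.
by apply: (@mem_adjacent _ j); rewrite n_in orbT.
Qed.

Lemma supported_cre s j psi : supported_in s psi ->
  supported_in (adjacent s) (cre j psi).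
Proof.
move=> s_psi; split=> [|n]; first exact: undup_uniq.
apply: contraNeq => /(cre_supp s_psi) n_in.
by apply: (@mem_adjacent _ j); rewrite n_in.
Qed.

Lemma supported_sum s (I : finType) (c : I -> C) (f : I -> cf -> C) :
  uniq s -> (forall i, supported_in s (f i)) ->
  supported_in s (fun n => \sum_i c i * f i n).
Proof.
move=> s_uniq f_supp; split=> // n ns.
by rewrite big1 // => i _; have [_ ->] := f_supp i; rewrite ?mulr0.
Qed.

End Fock.

Section FieldOperator.
Variables (R : realType) (L Lam : R).
Local Notation C := R[i].
Local Notation M := (mode L Lam).
Local Notation cf := (config L Lam).
Implicit Types (n : cf) (j k : M) (s t : seq cf) (phi psi chi : cf -> C).
Variable v : M -> C.

Definition Lcoef (y : R3 R) j : C :=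
  (Num.sqrt (norm3 (kmode j)) / Num.sqrt (2 * volume L))%:C%C * (v j)^*
    * expi (dot3 (kmode j) y).

Definition Lcomm : R :=
  (2 * volume L)^-1 * \sum_j norm3 (kmode j) * complex.Re (`|v j| ^+ 2).

Lemma LopE y phi : Lop v y phi = fun n => \sum_j Lcoef y j * ann j phi n.
Proof. by []. Qed.

Lemma LstarE y phi : Lstar v y phi = fun n => \sum_j (Lcoef y j)^* * cre j phi n.
Proof.
apply/funext => n; apply: eq_bigr => j _.
by rewrite /Lcoef !rmorphM /= !conj_realc conjCK.
Qed.

Lemma supported_Lop y s psi : supported_in s psi ->
  supported_in (adjacent s) (Lop v y psi).
Proof.
move=> s_psi; apply: supported_sum; first exact: undup_uniq.
by move=> j; apply: supported_ann.
Qed.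

Lemma supported_Lstar y s psi : supported_in s psi ->
  supported_in (adjacent s) (Lstar v y psi).
Proof.
move=> s_psi; rewrite LstarE; apply: supported_sum; first exact: undup_uniq.
by move=> j; apply: supported_cre.
Qed.

Lemma dotF_Lstar y s t phi chi : supported_in s phi -> supported_in t chi ->
  dotF s phi (Lstar v y chi) = dotF t (Lop v y phi) chi.
Proof.
move=> s_phi t_chi; rewrite LstarE dotF_sumr LopE dotF_suml.
by apply: eq_bigr => j _; rewrite (dotF_cre j s_phi t_chi).
Qed.

Lemma dotF_Lop y s t phi chi : supported_in s phi -> supported_in t chi ->
  dotF s phi (Lop v y chi) = dotF t (Lstar v y phi) chi.
Proof. by move=> s_phi t_chi; rewrite dotFC -(dotF_Lstar y t_chi s_phi) -dotFC. Qed.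

Hypothesis L_ge0 : 0 <= L.

Lemma volume_ge0 : 0 <= 2 * volume L.
Proof. by rewrite mulr_ge0 // exprn_ge0. Qed.

Lemma Lcomm_ge0 : 0 <= Lcomm.
Proof.
rewrite mulr_ge0 ?invr_ge0 ?volume_ge0 //; apply: sumr_ge0 => j _.
by rewrite mulr_ge0 ?sqrtr_ge0 // Re_ge0 // exprn_ge0.
Qed.

Lemma sum_Lcoef_sqr y : \sum_j Lcoef y j * (Lcoef y j)^* = Lcomm%:C%C.
Proof.
rewrite /Lcomm mulr_sumr rmorph_sum; apply: eq_bigr => j _.
have a2 : (Num.sqrt (norm3 (kmode j)) / Num.sqrt (2 * volume L)) ^+ 2 =
          (2 * volume L)^-1 * norm3 (kmode j).
  by rewrite expr_div_n !sqr_sqrtr ?volume_ge0 ?sqrtr_ge0 // mulrC.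
have v2 : v j * (v j)^* = (complex.Re (`|v j| ^+ 2))%:C%C.
  by rewrite -normCK RRe_real // rpredX ?normr_real.
have -> : Lcoef y j * (Lcoef y j)^* =
    ((Num.sqrt (norm3 (kmode j)) / Num.sqrt (2 * volume L)) ^+ 2)%:C%C
    * (v j * (v j)^*) * (expi (dot3 (kmode j) y) * (expi (dot3 (kmode j) y))^*).
  by rewrite /Lcoef rmorphXn !rmorphM /= !conj_realc conjCK; ring.
by rewrite expiMJ mulr1 v2 -rmorphM a2 -mulrA.
Qed.

Lemma Lop_Lstar y psi n :
  Lop v y (Lstar v y psi) n = Lstar v y (Lop v y psi) n + Lcomm%:C%C * psi n.
Proof.
rewrite !LstarE !LopE /= -(sum_Lcoef_sqr y).
exact: (ann_cre_sum (Lcoef y) (fun k => (Lcoef y k)^*)).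
Qed.

Lemma dotF_Lstar_sqr y s psi : supported_in s psi ->
  dotF (adjacent s) (Lstar v y psi) (Lstar v y psi) =
  dotF (adjacent s) (Lop v y psi) (Lop v y psi) + Lcomm%:C%C * dotF s psi psi.
Proof.
move=> s_psi; rewrite -(dotF_Lop y s_psi (supported_Lstar y s_psi)).
have -> : Lop v y (Lstar v y psi) =
    fun n => Lstar v y (Lop v y psi) n + Lcomm%:C%C * psi n.
  by apply/funext => n; rewrite Lop_Lstar.
by rewrite dotFDr dotFZr (dotF_Lstar y s_psi (supported_Lop y s_psi)).
Qed.

Lemma dotF_sq_LopDLstar y s psi : supported_in s psi ->
  dotF s psi (opsq (opadd (Lop v y) (Lstar v y)) psi) =
  dotF (adjacent s) (fun n => Lop v y psi n + Lstar v y psi n)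
                    (fun n => Lop v y psi n + Lstar v y psi n).
Proof.
move=> s_psi; set X := fun n => _ + _.
have s_X : supported_in (adjacent s) X.
  exact: supportedD (supported_Lop y s_psi) (supported_Lstar y s_psi).
change (dotF s psi (fun n => Lop v y X n + Lstar v y X n) = dotF (adjacent s) X X).
by rewrite dotFDr (dotF_Lop y s_psi s_X) (dotF_Lstar y s_psi s_X) addrC -dotFDl.
Qed.

Lemma dotF_sq_LopBLstar y s psi : supported_in s psi ->
  dotF s psi (opsq (opsub (Lop v y) (Lstar v y)) psi) =
  - dotF (adjacent s) (fun n => Lop v y psi n - Lstar v y psi n)
                      (fun n => Lop v y psi n - Lstar v y psi n).
Proof.
move=> s_psi; set Y := fun n => _ - _.
have s_Y : supported_in (adjacent s) Y.
  exact: supportedB (supported_Lop y s_psi) (supported_Lstar y s_psi).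
change (dotF s psi (fun n => Lop v y Y n - Lstar v y Y n) = - dotF (adjacent s) Y Y).
by rewrite dotFBr (dotF_Lop y s_psi s_Y) (dotF_Lstar y s_psi s_Y) -opprB -dotFBl.
Qed.

Lemma sq_LopDLstar_sub_sq_LopBLstar y s psi : supported_in s psi ->
  dotF s psi (opsq (opadd (Lop v y) (Lstar v y)) psi)
    - dotF s psi (opsq (opsub (Lop v y) (Lstar v y)) psi) =
  (4 : R)%:C%C * dotF (adjacent s) (Lop v y psi) (Lop v y psi)
    + (2 * Lcomm)%:C%C * dotF s psi psi.
Proof.
move=> s_psi; rewrite dotF_sq_LopDLstar // dotF_sq_LopBLstar // opprK.
rewrite dotF_parallelogram dotF_Lstar_sqr // [(2 * Lcomm)%:C%C]rmorphM !rmorph_nat; ring.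
Qed.

Lemma Re_sq_LopDLstar_le y s psi : supported_in s psi ->
  complex.Re (dotF s psi (opsq (opadd (Lop v y) (Lstar v y)) psi)) <=
  4 * complex.Re (dotF (adjacent s) (Lop v y psi) (Lop v y psi))
    + 2 * Lcomm * complex.Re (dotF s psi psi).
Proof.
move=> s_psi; rewrite -!ReZ -ReD -(sq_LopDLstar_sub_sq_LopBLstar y s_psi).
by apply: Re_le; rewrite lerDl dotF_sq_LopBLstar // opprK dotF_ge0.
Qed.

Lemma Re_sq_LopBLstar_ge y s psi : supported_in s psi ->
  - complex.Re (dotF s psi (opsq (opsub (Lop v y) (Lstar v y)) psi)) <=
  4 * complex.Re (dotF (adjacent s) (Lop v y psi) (Lop v y psi))
    + 2 * Lcomm * complex.Re (dotF s psi psi).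
Proof.
move=> s_psi; rewrite -!ReZ -ReD -(sq_LopDLstar_sub_sq_LopBLstar y s_psi) -ReN.
by apply: Re_le; rewrite lerDr dotF_sq_LopDLstar // dotF_ge0.
Qed.

End FieldOperator.

Section PhotonIntegrals.
Variables (R : realType) (L Lam : R).
Local Notation C := R[i].
Local Notation M := (mode L Lam).
Local Notation cf := (config L Lam).
Hypothesis L_ge0 : 0 <= L.
Variable v : M -> C.
Hypothesis v_neq0 : forall j, v j != 0.
Variable w : R3 R -> R.
Hypothesis w_ge0 : forall y, 0 <= w y.
Hypothesis w_int : (@leb3 R).-integrable setT (EFin \o w).
Local Notation wint := (wint (@leb3 R) w).
Implicit Types (s t : seq cf) (psi : cf -> C).

Lemma bmeasurable_Lop psi n : bmeasurable (fun y => Lop v y psi n).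
Proof.
rewrite /Lop; apply: bmeasurable_sum => j.
apply: bmeasurableM _ (bmeasurable_cst _).
exact: bmeasurableM (bmeasurable_cst _) (bmeasurable_expi _).
Qed.

Lemma bmeasurable_Lstar psi n : bmeasurable (fun y => Lstar v y psi n).
Proof.
rewrite /Lstar; apply: bmeasurable_sum => j.
apply: bmeasurableM _ (bmeasurable_cst _).
exact: bmeasurableM (bmeasurable_cst _) (bmeasurableJ (bmeasurable_expi _)).
Qed.

Lemma bmeasurable_dotF t (F G : R3 R -> cf -> C) :
  (forall n, bmeasurable (fun y => F y n)) ->
  (forall n, bmeasurable (fun y => G y n)) ->
  bmeasurable (fun y => dotF t (F y) (G y)).
Proof.
move=> mF mG; apply: bmeasurable_sum => n.
exact: bmeasurableM (bmeasurableJ (mF n)) (mG n).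
Qed.

Lemma bmeasurable_sq_LopDLstar s psi : supported_in s psi ->
  bmeasurable (fun y => dotF s psi (opsq (opadd (Lop v y) (Lstar v y)) psi)).
Proof.
move=> s_psi.
have mX n : bmeasurable (fun y => Lop v y psi n + Lstar v y psi n).
  exact: bmeasurableD (bmeasurable_Lop psi n) (bmeasurable_Lstar psi n).
apply: eq_bmeasurable (bmeasurable_dotF (adjacent s) mX mX) => y.
by rewrite dotF_sq_LopDLstar.
Qed.

Lemma bmeasurable_sq_LopBLstar s psi : supported_in s psi ->
  bmeasurable (fun y => dotF s psi (opsq (opsub (Lop v y) (Lstar v y)) psi)).
Proof.
move=> s_psi.
have mY n : bmeasurable (fun y => Lop v y psi n - Lstar v y psi n).
  exact: bmeasurableB (bmeasurable_Lop psi n) (bmeasurable_Lstar psi n).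
apply: eq_bmeasurable (bmeasurableN (bmeasurable_dotF (adjacent s) mY mY)) => y.
by rewrite dotF_sq_LopBLstar.
Qed.

Lemma bmeasurable_sqr_Lop t psi :
  bmeasurable (fun y => dotF t (Lop v y psi) (Lop v y psi)).
Proof. by apply: bmeasurable_dotF => n; apply: bmeasurable_Lop. Qed.

(* The family to which the hypothesis on w-hat is applied, one configuration [n]
   at a time. *)
Definition Lamp psi n j : C :=
  (Num.sqrt (norm3 (kmode j)))%:C%C * v j * (ann j psi n)^*.

Lemma Lcoef_ann y psi n j : Lcoef v y j * ann j psi n =
  ((Num.sqrt (2 * volume L))^-1)%:C%C * (Lamp psi n j)^* * expi (dot3 (kmode j) y).
Proof. by rewrite /Lcoef /Lamp /ann !rmorphM /= !conj_realc !conjCK; ring. Qed.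

Lemma sqr_Lop y psi n : (Lop v y psi n)^* * Lop v y psi n =
  \sum_j \sum_k ((2 * volume L)^-1)%:C%C * (Lamp psi n j)^* * Lamp psi n k
                  * expi (dot3 (kmode j - kmode k) y).
Proof.
rewrite !LopE /=; under eq_bigr do rewrite Lcoef_ann.
rewrite rmorph_sum big_distrlr /=.
rewrite exchange_big /=; apply: eq_bigr => j _; apply: eq_bigr => k _.
have -> : ((2 * volume L)^-1)%:C%C =
    ((Num.sqrt (2 * volume L))^-1)%:C%C * ((Num.sqrt (2 * volume L))^-1)%:C%C.
  by rewrite -rmorphM -invfM -expr2 sqr_sqrtr // volume_ge0.
move: (Lamp psi n j) (Lamp psi n k) => a b.
by rewrite !rmorphM /= conj_realc conjCK dot3B -expiJM; ring.
Qed.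

Lemma wint_sqr_Lop t psi :
  wint (fun y => dotF t (Lop v y psi) (Lop v y psi)) =
  complex.Re (\sum_(n <- t) \sum_j \sum_k ((2 * volume L)^-1)%:C%C
                * (Lamp psi n j)^* * Lamp psi n k * fourier w (kmode j - kmode k)).
Proof.
pose D n j k := ((2 * volume L)^-1)%:C%C * (Lamp psi n j)^* * Lamp psi n k.
have mE n j k : bmeasurable (fun y => D n j k * expi (dot3 (kmode j - kmode k) y)).
  exact: bmeasurableM (bmeasurable_cst _) (bmeasurable_expi _).
transitivity (wint (fun y => \sum_(n <- t) \sum_j \sum_k
                              D n j k * expi (dot3 (kmode j - kmode k) y))).
  by apply: eq_wint => y; apply: eq_bigr => n _; rewrite sqr_Lop.
rewrite (wint_sum w_int) => [|n]; last first.
  by do 2 (apply: bmeasurable_sum => ?); apply: mE.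
rewrite Re_sum; apply: eq_bigr => n _.
rewrite (wint_sum w_int) => [|j]; last by apply: bmeasurable_sum => ?; apply: mE.
rewrite Re_sum; apply: eq_bigr => j _.
rewrite (wint_sum w_int _ (mE n j)) Re_sum; apply: eq_bigr => k _.
exact: wint_expi.
Qed.

Lemma dotF_Hf s psi : supported_in s psi ->
  dotF s psi (Hf psi) =
  \sum_(n <- adjacent s) \sum_j (norm3 (kmode j))%:C%C * ((ann j psi n)^* * ann j psi n).
Proof.
move=> s_psi; rewrite /Hf dotF_sumr exchange_big /=; apply: eq_bigr => j _.
by rewrite (dotF_cre j s_psi (supported_ann j s_psi)) big_distrr.
Qed.

Lemma sqr_Lamp psi n j :
  `|Lamp psi n j| ^+ 2 / `|v j| ^+ 2 =
  (norm3 (kmode j))%:C%C * ((ann j psi n)^* * ann j psi n).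
Proof.
have vv : v j * (v j)^* != 0 by rewrite mul_conjC_eq0 v_neq0.
rewrite !normCK.
have -> : Lamp psi n j * (Lamp psi n j)^* =
    (Num.sqrt (norm3 (kmode j)))%:C%C * (Num.sqrt (norm3 (kmode j)))%:C%C
    * ((ann j psi n)^* * ann j psi n) * (v j * (v j)^*).
  rewrite /Lamp; move: (ann j psi n) => a.
  by rewrite !rmorphM /= conj_realc conjCK; ring.
by rewrite mulfK // -rmorphM -expr2 sqr_sqrtr // sqrtr_ge0.
Qed.

Hypothesis hyp : forall f : M -> C,
  \sum_(j : M) \sum_(j' : M)
     ((2 * volume L)^-1)%:C%C * (f j)^* * f j' * fourier w (kmode j - kmode j')
  <= \sum_(j : M) `|f j| ^+ 2 / `|v j| ^+ 2.

Lemma wint_sqr_Lop_le_Hf s psi : supported_in s psi ->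
  wint (fun y => dotF (adjacent s) (Lop v y psi) (Lop v y psi))
  <= complex.Re (dotF s psi (Hf psi)).
Proof.
move=> s_psi; rewrite wint_sqr_Lop dotF_Hf //; apply/Re_le/ler_sum => n _.
rewrite -(eq_bigr _ (fun j _ => sqr_Lamp psi n j)); exact: hyp.
Qed.

Lemma int3_sq_LopDLstar_le s psi : supported_in s psi ->
  int3 (fun y => w y * complex.Re (dotF s psi (opsq (opadd (Lop v y) (Lstar v y)) psi)))
  <= 4 * complex.Re (dotF s psi (Hf psi))
     + 2 * Lcomm v * complex.Re (dotF s psi psi) * int3 w.
Proof.
move=> s_psi.
apply: le_trans (wint_le_affine w_int w_ge0 (bmeasurable_sq_LopDLstar s_psi)
  (bmeasurable_sqr_Lop _ psi) (fun y => Re_sq_LopDLstar_le v L_ge0 y s_psi)) _.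
by rewrite lerD2r ler_wpM2l // wint_sqr_Lop_le_Hf.
Qed.

Lemma int3_sq_LopBLstar_ge s psi : supported_in s psi ->
  - int3 (fun y => w y * complex.Re (dotF s psi (opsq (opsub (Lop v y) (Lstar v y)) psi)))
  <= 4 * complex.Re (dotF s psi (Hf psi))
     + 2 * Lcomm v * complex.Re (dotF s psi psi) * int3 w.
Proof.
move=> s_psi.
have mB := bmeasurable_sq_LopBLstar s_psi.
change (- wint (fun y => dotF s psi (opsq (opsub (Lop v y) (Lstar v y)) psi))
  <= 4 * complex.Re (dotF s psi (Hf psi))
     + 2 * Lcomm v * complex.Re (dotF s psi psi) * int3 w).
rewrite -mulN1r -(wintZ w_int) //.
apply: le_trans (wint_le_affine w_int w_ge0 (bmeasurableM (bmeasurable_cst _) mB)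
  (bmeasurable_sqr_Lop _ psi) _) _ => [y|].
  by rewrite ReZ mulN1r; apply: Re_sq_LopBLstar_ge.
by rewrite lerD2r ler_wpM2l // wint_sqr_Lop_le_Hf.
Qed.

End PhotonIntegrals.

Theorem corollary1 (R : realType) (L Lam : R) (hL : 0 < L) (hLam : 0 < Lam)
  (v : mode L Lam -> R[i]) (hv : forall j, v j != 0)
  (w : R3 R -> R) (hw0 : forall x, 0 <= w x)
  (hwint : (@leb3 R).-integrable setT (EFin \o w))
  (hyp : forall f : mode L Lam -> R[i],
     \sum_(j : mode L Lam) \sum_(j' : mode L Lam)
        ((2 * volume L)^-1)%:C%C * (f j)^* * f j'
          * fourier w (kmode j - kmode j')
     <= \sum_(j : mode L Lam) `|f j| ^+ 2 / `|v j| ^+ 2) :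
  let c := (2 * volume L)^-1 * \sum_(j : mode L Lam) norm3 (kmode j) * complex.Re (`|v j| ^+ 2) in
  forall (s : seq (config L Lam)) (psi : config L Lam -> R[i]),
    supported_in s psi ->
    (- c * int3 w * complex.Re (dotF s psi psi)
       + 4^-1 * int3 (fun y => w y
            * complex.Re (dotF s psi (opsq (opadd (Lop v y) (Lstar v y)) psi)))
     <= complex.Re (dotF s psi (Hf psi)))
    /\
    (- c * int3 w * complex.Re (dotF s psi psi)
       - 4^-1 * int3 (fun y => w y
            * complex.Re (dotF s psi (opsq (opsub (Lop v y) (Lstar v y)) psi)))
     <= complex.Re (dotF s psi (Hf psi))).
Proof.
move=> c s psi s_psi.
have c_ge0 : 0 <= c := Lcomm_ge0 v (ltW hL).
have N_ge0 : 0 <= complex.Re (dotF s psi psi) := Re_ge0 (dotF_ge0 s psi).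
have w_ge0 : 0 <= int3 w by apply: Rintegral_ge0 => y _; apply: hw0.
have cwN_ge0 : 0 <= c * int3 w * complex.Re (dotF s psi psi).
  by do 2 apply: mulr_ge0 => //.
have A_le := int3_sq_LopDLstar_le (ltW hL) hv hw0 hwint hyp s_psi.
have B_ge := int3_sq_LopBLstar_ge (ltW hL) hv hw0 hwint hyp s_psi.
have cE : Lcomm v = c by [].
rewrite cE in A_le B_ge.
by split; nra.
Qed.
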